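(* Let $n\geq5$ and let $M$ be a Lagrangian submanifold of a complex space form $\tilde M^n(4c)$ such that at a point $p\in M$ equality holds in $\delta(2,n-2)\leq\frac{n^2(n-2)}{4(n-1)}H^2+2(n-2)c$. Then there exist an orthonormal basis $\{e_1,\ldots,e_n\}$ of $T_pM$ and real numbers $\gamma,\lambda,\mu$ and $h^k_{ij}$ ($i,j,k\ge3$) such that $$h(e_1,e_1)=\gamma Je_1,\quad h(e_1,e_2)=(n\lambda-\gamma)Je_2,\quad h(e_2,e_2)=(n\lambda-\gamma)Je_1+n\mu Je_2,$$ $$h(e_1,e_i)=\lambda Je_i,\quad h(e_2,e_i)=\mu Je_i,\quad h(e_i,e_j)=\delta_{ij}(\lambda Je_1+\mu Je_2)+\sum_{k=3}^nh^k_{ij}Je_k$$ for $i,j\ge3$, where the $h^k_{ij}$ are symmetric in the three indices and $h^k_{33}+\cdots+h^k_{nn}=0$ for every $k\ge3$. Moreover $\gamma\ge0$ and $\gamma\ge\frac{2n}{3}\lambda$; if $\gamma=0$ then $\lambda=\mu=0$; and if $\gamma>0$ then $\gamma>\frac n2\lambda$.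
   Context: A complex space form $\tilde M^n(4c)$ is a Kähler manifold of complex dimension $n$ with complex structure $J$ and constant holomorphic sectional curvature $4c$. A real $n$-dimensional submanifold $M$ is Lagrangian if $J$ maps each $T_pM$ onto the normal space. $h$ is the second fundamental form, $H=\frac1n\operatorname{trace}h$, $H^2=\langle H,H\rangle$. For $L\subseteq T_pM$ of dimension $r\ge2$ with orthonormal basis $e_1,\ldots,e_r$, $\tau(L)=\sum_{\alpha<\beta}K(e_\alpha\wedge e_\beta)$ ($K$ the sectional curvature of $M$), $\tau(p)=\tau(T_pM)$, and $\delta(2,n-2)(p)=\tau(p)-\inf\{\tau(L_1)+\tau(L_2)\}$ over mutually orthogonal subspaces $L_1,L_2\subseteq T_pM$ with $\dim L_1=2$, $\dim L_2=n-2$. *)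

From HB Require Import structures.
From mathcomp Require Import all_boot all_order all_algebra.
From mathcomp Require Import classical_sets reals.
Set Implicit Arguments.
Unset Strict Implicit.
Unset Printing Implicit Defensive.
Import Order.TTheory GRing.Theory Num.Theory.
Local Open Scope ring_scope.
Local Open Scope classical_set_scope.

(* Pointwise model: T_pM is identified (isometrically) with R^n = 'rV[R]_n
   with the standard inner product; the normal space T_p^perp M = J(T_pM)
   is identified with T_pM via J^{-1}.  So a normal vector J v is
   represented by v, and the second fundamental form is encoded by its
   components C i j k = < h(e_i,e_j), J e_k > in the standard basis.     *)
Section Defs.
Variable R : realType.
Variable n : nat.

Definition vdot (u v : 'rV[R]_n) : R := \sum_(i < n) u 0 i * v 0 i.

Definition orthonormal_family (r : nat) (f : 'I_r -> 'rV[R]_n) : Prop :=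
  forall a b : 'I_r, vdot (f a) (f b) = (a == b)%:R.

(* Lagrangian condition: the cubic form <h(X,Y),JZ> is totally symmetric *)
Definition cubic_symmetric (C : 'I_n -> 'I_n -> 'I_n -> R) : Prop :=
  forall i j k, C i j k = C j i k /\ C i j k = C i k j.

(* J^{-1} h(u,v) *)
Definition sff (C : 'I_n -> 'I_n -> 'I_n -> R) (u v : 'rV[R]_n) : 'rV[R]_n :=
  \row_(k < n) \sum_(i < n) \sum_(j < n) u 0 i * v 0 j * C i j k.

(* sectional curvature of the plane spanned by orthonormal u, v, given by
   the Gauss equation for a Lagrangian submanifold of M~^n(4c) *)
Definition sec_curv (c : R) C (u v : 'rV[R]_n) : R :=
  c + vdot (sff C u u) (sff C v v) - vdot (sff C u v) (sff C u v).

Definition tau_fam (c : R) C (r : nat) (f : 'I_r -> 'rV[R]_n) : R :=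
  \sum_(a < r) \sum_(b < r | (a < b)%N) sec_curv c C (f a) (f b).

Definition std_basis : 'I_n -> 'rV[R]_n := fun i => delta_mx 0 i.

Definition tau_p (c : R) C : R := tau_fam c C std_basis.

Definition mean_curv C : 'rV[R]_n :=
  (n%:R)^-1 *: \sum_(i < n) sff C (std_basis i) (std_basis i).
Definition H2 C : R := vdot (mean_curv C) (mean_curv C).

Definition delta2 (c : R) C : R :=
  tau_p c C -
  inf [set x | exists (f1 : 'I_2 -> 'rV[R]_n) (f2 : 'I_(n - 2) -> 'rV[R]_n),
         orthonormal_family f1 /\ orthonormal_family f2 /\
         (forall a b, vdot (f1 a) (f2 b) = 0) /\
         x = tau_fam c C f1 + tau_fam c C f2].

End Defs.

(* Write [h^k_ij = <h(e_i, e_j), J e_k>] in an orthonormal frame [e_1, ..., e_n]; this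
   array is totally symmetric.  For [L1 = span(e_1, e_2)] and [L2] its orthogonal
   complement, the Gauss equation gives [tau(p) - tau(L1) - tau(L2) = 2(n-2)c + Q] with
   [Q] quadratic in the [h^k_ij], and [alpha n^2 H^2 - Q], [alpha = (n-2)/(4(n-1))], is
   a sum of squares as soon as [alpha >= 3/16], i.e. [n >= 5].  By compactness some
   frame minimises [tau(L1) + tau(L2)], hence realises the infimum defining
   [delta(2,n-2)]; at a point of equality all the squares vanish for that frame, which
   determines every [h^k_ij] except [h^1_11], [h^2_11], [h^1_22] and [h^2_22].
   Among the minimising frames pick one maximising [h^1_11].  Rotations of the plane
   [L1] preserve [tau(L1) + tau(L2)], so the binary cubic [<h(v, v), J v>],
   [v = x e_1 + y e_2], is maximal on the unit circle at [(1, 0)]; along the rational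
   parametrisation of the circle the first and second order conditions give
   [h^2_11 = 0] and [2 h^1_22 <= h^1_11], from which the sign conditions follow. *)

From HB Require Import structures.
From mathcomp Require Import all_boot all_order all_algebra.
From mathcomp Require Import boolp classical_sets reals topology normedtype derive.
From mathcomp Require Import ring lra.
Import numFieldNormedType.Exports.
Import Order.TTheory GRing.Theory Num.Theory.
Local Open Scope ring_scope.
Set Implicit Arguments.
Unset Strict Implicit.
Unset Printing Implicit Defensive.

Section Bilinear.
Variables (R : realType) (n : nat).
Implicit Types u v w : 'rV[R]_n.

Lemma vdotC u v : vdot u v = vdot v u.
Proof. by apply: eq_bigr => i _; rewrite mulrC. Qed.

Lemma vdotDl u v w : vdot (u + v) w = vdot u w + vdot v w.
Proof. by rewrite /vdot -big_split; apply: eq_bigr => i _; rewrite mxE mulrDl. Qed.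

Lemma vdotZl a u w : vdot (a *: u) w = a * vdot u w.
Proof. by rewrite /vdot mulr_sumr; apply: eq_bigr => i _; rewrite mxE mulrA. Qed.

Lemma vdot_suml I (r : seq I) (P : pred I) (F : I -> 'rV[R]_n) w :
  vdot (\sum_(i <- r | P i) F i) w = \sum_(i <- r | P i) vdot (F i) w.
Proof.
rewrite /vdot exchange_big /=; apply: eq_bigr => k _.
by rewrite summxE mulr_suml.
Qed.

Lemma vdotDr u v w : vdot w (u + v) = vdot w u + vdot w v.
Proof. by rewrite vdotC vdotDl !(vdotC w). Qed.

Lemma vdotZr a u w : vdot w (a *: u) = a * vdot w u.
Proof. by rewrite vdotC vdotZl vdotC. Qed.

Lemma vdot_sumr I (r : seq I) (P : pred I) (F : I -> 'rV[R]_n) w :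
  vdot w (\sum_(i <- r | P i) F i) = \sum_(i <- r | P i) vdot w (F i).
Proof. by rewrite vdotC vdot_suml; apply: eq_bigr => i _; exact: vdotC. Qed.

Variable C : 'I_n -> 'I_n -> 'I_n -> R.
Hypothesis C_sym : cubic_symmetric C.

Lemma sffE u v k :
  sff C u v 0 k = \sum_(p < n) \sum_(q < n) u 0 p * v 0 q * C p q k.
Proof. by rewrite mxE. Qed.

Lemma sffC u v : sff C u v = sff C v u.
Proof.
apply/rowP => k; rewrite !sffE exchange_big /=; apply: eq_bigr => p _.
by apply: eq_bigr => q _; rewrite (proj1 (C_sym q p k)) (mulrC (v 0 p)).
Qed.

Lemma sffDl u v w : sff C (u + v) w = sff C u w + sff C v w.
Proof.
apply/rowP => k; rewrite !mxE -big_split; apply: eq_bigr => p _.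
by rewrite -big_split; apply: eq_bigr => q _; rewrite mxE !mulrDl.
Qed.

Lemma sffZl a u w : sff C (a *: u) w = a *: sff C u w.
Proof.
apply/rowP => k; rewrite !mxE mulr_sumr; apply: eq_bigr => p _.
by rewrite mulr_sumr; apply: eq_bigr => q _; rewrite mxE !mulrA.
Qed.

Lemma sffDr u v w : sff C w (u + v) = sff C w u + sff C w v.
Proof. by rewrite sffC sffDl !(sffC w). Qed.

Lemma sffZr a u w : sff C w (a *: u) = a *: sff C w u.
Proof. by rewrite sffC sffZl sffC. Qed.

Definition cubic_form u v w := vdot (sff C u v) w.

Lemma cubic_formE u v w : cubic_form u v w =
  \sum_(p < n) \sum_(q < n) \sum_(k < n) u 0 p * v 0 q * w 0 k * C p q k.
Proof.
rewrite /cubic_form /vdot; under eq_bigr do rewrite sffE big_distrl /=.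
rewrite exchange_big /=; apply: eq_bigr => p _.
under eq_bigr do rewrite big_distrl /=.
rewrite exchange_big /=; apply: eq_bigr => q _.
by apply: eq_bigr => k _; ring.
Qed.

Lemma cubic_formC12 u v w : cubic_form u v w = cubic_form v u w.
Proof. by rewrite /cubic_form sffC. Qed.

Lemma cubic_formC23 u v w : cubic_form u v w = cubic_form u w v.
Proof.
rewrite !cubic_formE; apply: eq_bigr => p _; rewrite exchange_big /=.
apply: eq_bigr => q _; apply: eq_bigr => k _.
by rewrite (proj2 (C_sym p k q)); ring.
Qed.

Lemma cubic_formDl a b u v w z :
  cubic_form (a *: u + b *: v) w z = a * cubic_form u w z + b * cubic_form v w z.
Proof. by rewrite /cubic_form sffDl !sffZl vdotDl !vdotZl. Qed.

Lemma cubic_formDm a b u v w z :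
  cubic_form w (a *: u + b *: v) z = a * cubic_form w u z + b * cubic_form w v z.
Proof. by rewrite cubic_formC12 cubic_formDl !(cubic_formC12 _ w). Qed.

Lemma cubic_formDr a b u v w z :
  cubic_form w z (a *: u + b *: v) = a * cubic_form w z u + b * cubic_form w z v.
Proof. by rewrite cubic_formC23 cubic_formDm !(cubic_formC23 w _ z). Qed.

End Bilinear.

Section OrthonormalFrame.
Variables (R : realType) (n : nat).
Variable e : 'I_n -> 'rV[R]_n.
Hypothesis e_on : orthonormal_family e.

Lemma sum_mul_delta (F : 'I_n -> R) p : \sum_(q < n) F q * (p == q)%:R = F p.
Proof.
rewrite (bigD1 p) //= eqxx mulr1 big1 ?addr0 // => q /negbTE.
by rewrite eq_sym => ->; rewrite mulr0.
Qed.

Lemma frame_cols_orthonormal p q : \sum_(i < n) e i 0 p * e i 0 q = (p == q)%:R.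
Proof.
pose E : 'M[R]_n := \matrix_(i, p) e i 0 p.
have EEt : E *m E^T = 1%:M.
  apply/matrixP => a b; rewrite !mxE -e_on /vdot.
  by apply: eq_bigr => k _; rewrite !mxE.
have /matrixP/(_ p q) := mulmx1C EEt; rewrite !mxE => <-.
by apply: eq_bigr => i _; rewrite !mxE.
Qed.

Lemma sum_frame_coords (F : 'I_n -> 'I_n -> R) :
  \sum_(i < n) \sum_(p < n) \sum_(q < n) e i 0 p * e i 0 q * F p q = \sum_(p < n) F p p.
Proof.
rewrite exchange_big /=; apply: eq_bigr => p _.
rewrite exchange_big /= -[RHS](sum_mul_delta (F p) p).
apply: eq_bigr => q _; rewrite -frame_cols_orthonormal big_distrr /=.
by apply: eq_bigr => i _; ring.
Qed.

Lemma frame_coords_dot (X Y : 'I_n -> R) :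
  \sum_(i < n) (\sum_(p < n) e i 0 p * X p) * (\sum_(q < n) e i 0 q * Y q)
  = \sum_(p < n) X p * Y p.
Proof.
rewrite -(sum_frame_coords (fun p q => X p * Y q)).
apply: eq_bigr => i _; rewrite big_distrl /=; apply: eq_bigr => p _.
by rewrite big_distrr /=; apply: eq_bigr => q _; ring.
Qed.

Lemma vdot_frame u v : vdot u v = \sum_(i < n) vdot u (e i) * vdot v (e i).
Proof.
rewrite /vdot -(frame_coords_dot (fun p => u 0 p) (fun p => v 0 p)).
by apply: eq_bigr => i _; congr (_ * _); apply: eq_bigr => p _; rewrite mulrC.
Qed.

Lemma frame_expansion u : u = \sum_(i < n) vdot u (e i) *: e i.
Proof.
apply/rowP => k; rewrite summxE -[LHS](sum_mul_delta (fun p => u 0 p) k).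
under [RHS]eq_bigr do rewrite mxE /vdot big_distrl /=.
rewrite exchange_big /=; apply: eq_bigr => p _.
rewrite eq_sym -frame_cols_orthonormal big_distrr /=.
by apply: eq_bigr => i _; ring.
Qed.

Variable C : 'I_n -> 'I_n -> 'I_n -> R.

Lemma sum_sff_frame : \sum_(i < n) sff C (e i) (e i) = \row_k \sum_(p < n) C p p k.
Proof.
apply/rowP => k; rewrite summxE mxE -(sum_frame_coords (fun p q => C p q k)).
by apply: eq_bigr => i _; rewrite sffE.
Qed.

Lemma sum_sqr_sff_frame :
  \sum_(i < n) \sum_(j < n) vdot (sff C (e i) (e j)) (sff C (e i) (e j))
  = \sum_(p < n) \sum_(q < n) \sum_(k < n) C p q k ^+ 2.
Proof.
have sum_j u : \sum_(j < n) vdot (sff C u (e j)) (sff C u (e j)) =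
    \sum_(k < n) \sum_(q < n) (\sum_(p < n) u 0 p * C p q k) ^+ 2.
  rewrite /vdot exchange_big /=; apply: eq_bigr => k _.
  pose X q := \sum_(p < n) u 0 p * C p q k.
  under [RHS]eq_bigr do rewrite expr2.
  rewrite -(frame_coords_dot X X); apply: eq_bigr => j _.
  suff -> : sff C u (e j) 0 k = \sum_(q < n) e j 0 q * X q by [].
  rewrite sffE exchange_big /=; apply: eq_bigr => q _; rewrite big_distrr /=.
  by apply: eq_bigr => p _; ring.
under eq_bigr do rewrite sum_j.
rewrite exchange_big /=; under eq_bigr do rewrite exchange_big /=.
rewrite [RHS]exchange_big /=; under [RHS]eq_bigr do rewrite exchange_big /=.
rewrite [RHS]exchange_big /=; apply: eq_bigr => k _; apply: eq_bigr => q _.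
under [RHS]eq_bigr do rewrite expr2.
rewrite -(frame_coords_dot (fun p => C p q k) (fun p => C p q k)).
by apply: eq_bigr => i _; rewrite expr2.
Qed.

End OrthonormalFrame.

Lemma std_basis_orthonormal (R : realType) (n : nat) : orthonormal_family (@std_basis R n).
Proof.
move=> a b; rewrite /vdot /std_basis.
under eq_bigr do rewrite !mxE /=.
rewrite [a == b]eq_sym -[RHS](sum_mul_delta (fun q => (q == a)%:R) b).
by apply: eq_bigr => q _; rewrite [q == b]eq_sym.
Qed.

Lemma sumr_sym_pairs (R : comNzRingType) r (F : 'I_r -> 'I_r -> R) :
  (forall a b, F a b = F b a) ->
  \sum_(a < r) \sum_(b < r) F a b =
  2 * (\sum_(a < r) \sum_(b < r | (a < b)%N) F a b) + \sum_(a < r) F a a.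
Proof.
move=> F_sym.
have split_row a : \sum_(b < r) F a b = \sum_(b < r | (a < b)%N) F a b
    + F a a + \sum_(b < r | (b < a)%N) F a b.
  rewrite (bigID (fun b : 'I_r => (a < b)%N)) /= [X in _ + X](bigD1 a) ?ltnn //= addrA.
  by congr (_ + _); apply: eq_bigl => b; rewrite -leqNgt ltn_neqAle andbC.
under eq_bigr do rewrite split_row.
rewrite !big_split /= (exchange_big_dep xpredT) //=.
under [X in _ + X]eq_bigr do under eq_bigr do rewrite F_sym.
ring.
Qed.

Section SectionalCurvature.
Variables (R : realType) (n : nat) (c : R).
Variable C : 'I_n -> 'I_n -> 'I_n -> R.
Hypothesis C_sym : cubic_symmetric C.

Lemma sec_curvC u v : sec_curv c C u v = sec_curv c C v u.
Proof. by rewrite /sec_curv vdotC (sffC C_sym u v). Qed.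

Lemma sec_curv_diag u : sec_curv c C u u = c.
Proof. by rewrite /sec_curv addrK. Qed.

Lemma tau_famE r (f : 'I_r -> 'rV[R]_n) :
  tau_fam c C f = (\sum_(a < r) \sum_(b < r) sec_curv c C (f a) (f b) - r%:R * c) / 2.
Proof.
rewrite (sumr_sym_pairs (fun a b => sec_curvC (f a) (f b))).
under [X in _ * _ + X]eq_bigr do rewrite sec_curv_diag.
by rewrite sumr_const card_ord /tau_fam; field.
Qed.

Lemma sum_sec_curv r (f : 'I_r -> 'rV[R]_n) :
  \sum_(a < r) \sum_(b < r) sec_curv c C (f a) (f b) =
  r%:R * r%:R * c
  + vdot (\sum_(a < r) sff C (f a) (f a)) (\sum_(a < r) sff C (f a) (f a))
  - \sum_(a < r) \sum_(b < r) vdot (sff C (f a) (f b)) (sff C (f a) (f b)).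
Proof.
have -> : r%:R * r%:R * c = \sum_(a < r) \sum_(b < r) c.
  by rewrite !sumr_const card_ord -mulr_natl -[(_ *+ r) *+ r]mulr_natl; ring.
rewrite vdot_suml -big_split -sumrB; apply: eq_bigr => a _.
by rewrite vdot_sumr -big_split -sumrB.
Qed.

Lemma tau_fam_frame (e : 'I_n -> 'rV[R]_n) :
  orthonormal_family e -> tau_fam c C e = tau_p c C.
Proof.
move=> e_on; rewrite /tau_p !tau_famE !sum_sec_curv.
by rewrite !sum_sff_frame ?sum_sqr_sff_frame //; exact: std_basis_orthonormal.
Qed.

End SectionalCurvature.

Section FrameBlocks.
Variables (n : nat) (n_gt1 : (1 < n)%N).

Definition o0 : 'I_n := Ordinal (ltnW n_gt1).
Definition o1 : 'I_n := Ordinal n_gt1.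

Lemma ord_cases (i : 'I_n) : [\/ i = o0, i = o1 | (2 <= i)%N].
Proof.
by case: i => [[|[|i]] lt_i_n]; [constructor 1 | constructor 2 | constructor 3];
  try exact: val_inj.
Qed.

Lemma ord_eq_o0 (i : 'I_n) : val i = 0%N -> i = o0.
Proof. by move=> i0; apply: val_inj. Qed.

Lemma ord_eq_o1 (i : 'I_n) : val i = 1%N -> i = o1.
Proof. by move=> i1; apply: val_inj. Qed.

Lemma neq_o0 (i : 'I_n) : (2 <= i)%N -> (i == o0) = false.
Proof. by case: i => [[|[|i]] ?]. Qed.

Lemma neq_o1 (i : 'I_n) : (2 <= i)%N -> (i == o1) = false.
Proof. by case: i => [[|[|i]] ?]. Qed.

Lemma big_first_two (V : nmodType) (F : 'I_n -> V) :
  \sum_(i < n) F i = F o0 + F o1 + \sum_(i < n | (2 <= i)%N) F i.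
Proof.
rewrite (bigD1 o0) // (bigD1 o1) //= addrA; congr (_ + _).
by apply: eq_bigl => -[[|[|i]] ?].
Qed.

Lemma big_first_two_sym (R : comNzRingType) (F : 'I_n -> 'I_n -> R) :
  (forall i j, F i j = F j i) ->
  \sum_(i < n) \sum_(j < n) F i j =
  F o0 o0 + F o0 o1 + (F o1 o0 + F o1 o1)
  + 2 * \sum_(j < n | (2 <= j)%N) (F o0 j + F o1 j)
  + \sum_(i < n | (2 <= i)%N) \sum_(j < n | (2 <= j)%N) F i j.
Proof.
move=> F_sym; rewrite big_first_two !(big_first_two (F _)).
under [X in _ + X = _]eq_bigr do rewrite big_first_two.
rewrite !big_split /=.
under [in \sum_(i < n | _) F i o0]eq_bigr do rewrite F_sym.
under [in \sum_(i < n | _) F i o1]eq_bigr do rewrite F_sym.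
ring.
Qed.

Lemma sum_high_cst (R : comNzRingType) (x : R) :
  \sum_(i < n | (2 <= i)%N) x = (n%:R - 2) * x.
Proof.
apply: (@addrI _ (x + x)); rewrite -(big_first_two (fun _ => x)).
by rewrite sumr_const card_ord -mulr_natl; ring.
Qed.

Lemma sum_high_delta (R : pzSemiRingType) (F : 'I_n -> R) (j : 'I_n) : (2 <= j)%N ->
  \sum_(k < n | (2 <= k)%N) (j == k)%:R * F k = F j.
Proof.
move=> j_high; rewrite (bigD1 j) //= eqxx mul1r big1 ?addr0 // => k /andP[_ /negbTE].
by rewrite eq_sym => ->; rewrite mul0r.
Qed.

Lemma sum_sqr_sub_diag (R : comNzRingType) (x : 'I_n -> 'I_n -> R) (a : R) :
  \sum_(j < n | (2 <= j)%N) \sum_(k < n | (2 <= k)%N) (x j k - (j == k)%:R * a) ^+ 2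
  = \sum_(j < n | (2 <= j)%N) \sum_(k < n | (2 <= k)%N) x j k ^+ 2
    - 2 * a * \sum_(j < n | (2 <= j)%N) x j j + (n%:R - 2) * a ^+ 2.
Proof.
have row (j : 'I_n) : (2 <= j)%N ->
    \sum_(k < n | (2 <= k)%N) (x j k - (j == k)%:R * a) ^+ 2 =
    \sum_(k < n | (2 <= k)%N) x j k ^+ 2 - 2 * a * x j j + a ^+ 2.
  move=> j_high.
  have sqrE (k : 'I_n) : (x j k - (j == k)%:R * a) ^+ 2 =
      x j k ^+ 2 - 2 * a * ((j == k)%:R * x j k) + (j == k)%:R * a ^+ 2.
    by case: (j == k); rewrite ?mul1r ?mul0r; ring.
  under eq_bigr do rewrite sqrE.
  by rewrite big_split sumrB /= -mulr_sumr !sum_high_delta.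
by rewrite (eq_bigr _ row) big_split sumrB /= -mulr_sumr sum_high_cst.
Qed.

Definition ord_L1 (a : 'I_2) : 'I_n := cast_ord (subnKC n_gt1) (lshift (n - 2) a).
Definition ord_L2 (b : 'I_(n - 2)) : 'I_n := cast_ord (subnKC n_gt1) (rshift 2 b).

Lemma sum_L1 (V : nmodType) (F : 'I_n -> V) : \sum_(a < 2) F (ord_L1 a) = F o0 + F o1.
Proof. by rewrite !big_ord_recl big_ord0 addr0; congr (F _ + F _); exact: val_inj. Qed.

Lemma sum_L2 (V : nmodType) (F : 'I_n -> V) :
  \sum_(b < n - 2) F (ord_L2 b) = \sum_(i < n | (2 <= i)%N) F i.
Proof.
rewrite (reindex (cast_ord (subnKC n_gt1))) /=; last first.
  by exists (cast_ord (esym (subnKC n_gt1))) => i _; rewrite ?cast_ordK ?cast_ordKV.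
rewrite big_split_ord /= [X in _ = X + _]big_pred0 ?add0r // => a.
by rewrite /= leqNgt ltn_ord.
Qed.

Lemma ord_L1_inj : injective ord_L1.
Proof. by move=> a a' /(congr1 val) /= /val_inj. Qed.

Lemma ord_L2_inj : injective ord_L2.
Proof. by move=> b b' /(congr1 val) /= /addnI /val_inj. Qed.

Lemma ord_L1_neq_L2 a b : (ord_L1 a == ord_L2 b) = false.
Proof. by apply/negbTE; rewrite -(inj_eq val_inj) /= neq_ltn ltn_addr. Qed.

Variable R : realType.

Definition frame_join (f1 : 'I_2 -> 'rV[R]_n) (f2 : 'I_(n - 2) -> 'rV[R]_n) (i : 'I_n) :=
  match split (cast_ord (esym (subnKC n_gt1)) i) with inl a => f1 a | inr b => f2 b end.

Lemma frame_join_L1 f1 f2 a : frame_join f1 f2 (ord_L1 a) = f1 a.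
Proof. by rewrite /frame_join cast_ordK (unsplitK (inl _ a)). Qed.

Lemma frame_join_L2 f1 f2 b : frame_join f1 f2 (ord_L2 b) = f2 b.
Proof. by rewrite /frame_join cast_ordK (unsplitK (inr _ b)). Qed.

Lemma ord_L_cases (i : 'I_n) : (exists a, i = ord_L1 a) \/ (exists b, i = ord_L2 b).
Proof.
rewrite -[i](cast_ordKV (subnKC n_gt1)) -[cast_ord _ i]splitK.
by case: split => [a|b]; [left; exists a | right; exists b].
Qed.

Lemma frame_join_orthonormal f1 f2 :
  orthonormal_family f1 -> orthonormal_family f2 ->
  (forall a b, vdot (f1 a) (f2 b) = 0) -> orthonormal_family (frame_join f1 f2).
Proof.
move=> f1_on f2_on f12 i j.
have [[a ->]|[b ->]] := ord_L_cases i; have [[a' ->]|[b' ->]] := ord_L_cases j;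
  rewrite ?frame_join_L1 ?frame_join_L2 ?(inj_eq ord_L1_inj) ?(inj_eq ord_L2_inj) //.
- by rewrite ord_L1_neq_L2 f12.
- by rewrite eq_sym ord_L1_neq_L2 vdotC f12.
Qed.

End FrameBlocks.

Lemma ge5_gt1 n : (5 <= n)%N -> (1 < n)%N.
Proof. exact: leq_trans. Qed.

Section FrameCoefficients.
Variables (R : realType) (n : nat) (n_gt1 : (1 < n)%N).
Local Notation o0 := (o0 n_gt1).
Local Notation o1 := (o1 n_gt1).
Implicit Types D : 'I_n -> 'I_n -> 'I_n -> R.

Definition gauss D i j : R :=
  \sum_(k < n) D i i k * D j j k - \sum_(k < n) D i j k ^+ 2.

Definition mixed_curvature D : R :=
  \sum_(j < n | (2 <= j)%N) (gauss D o0 j + gauss D o1 j).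

Definition trace_sqr D : R := \sum_(k < n) (\sum_(i < n) D i i k) ^+ 2.

Variables (c : R) (C : 'I_n -> 'I_n -> 'I_n -> R).
Hypothesis C_sym : cubic_symmetric C.

Definition tau_blocks (f : 'I_n -> 'rV[R]_n) :=
  tau_fam c C (f \o ord_L1 n_gt1) + tau_fam c C (f \o ord_L2 n_gt1).

Variable e : 'I_n -> 'rV[R]_n.
Hypothesis e_on : orthonormal_family e.

Definition cubic_coef i j k := cubic_form C (e i) (e j) (e k).

Lemma cubic_coef_sym : cubic_symmetric cubic_coef.
Proof. by move=> i j k; split; [exact: cubic_formC12 | exact: cubic_formC23]. Qed.

Lemma sff_frame i j : sff C (e i) (e j) = \sum_(k < n) cubic_coef i j k *: e k.
Proof. exact: frame_expansion. Qed.

Lemma sec_curv_frame i j : sec_curv c C (e i) (e j) = c + gauss cubic_coef i j.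
Proof.
rewrite /sec_curv (vdot_frame e_on (sff C (e i) (e i))) (vdot_frame e_on (sff C (e i) (e j))).
by rewrite addrA; congr (_ + _ - _); apply: eq_bigr => k _; rewrite expr2.
Qed.

Lemma tau_L1 : tau_fam c C (e \o ord_L1 n_gt1) = sec_curv c C (e o0) (e o1).
Proof.
rewrite tau_famE //.
rewrite (sum_L1 n_gt1 (fun i => \sum_(b < 2) sec_curv c C (e i) (e (ord_L1 n_gt1 b)))).
rewrite !(sum_L1 n_gt1 (fun j => sec_curv c C (e _) (e j))) !sec_curv_diag.
by rewrite (sec_curvC c C_sym (e o1)); field.
Qed.

Lemma tau_L2 : tau_fam c C (e \o ord_L2 n_gt1) =
  (\sum_(i < n | (2 <= i)%N) \sum_(j < n | (2 <= j)%N) sec_curv c C (e i) (e j)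
   - (n%:R - 2) * c) / 2.
Proof.
rewrite tau_famE //.
rewrite (sum_L2 n_gt1 (fun i => \sum_(b < n - 2) sec_curv c C (e i) (e (ord_L2 n_gt1 b)))).
under eq_bigr do rewrite (sum_L2 n_gt1 (fun j => sec_curv c C (e _) (e j))).
by rewrite natrB.
Qed.

Lemma tau_p_split : tau_p c C - tau_blocks e = 2 * (n%:R - 2) * c + mixed_curvature cubic_coef.
Proof.
have mixedE : \sum_(j < n | (2 <= j)%N) (sec_curv c C (e o0) (e j) + sec_curv c C (e o1) (e j))
    = 2 * (n%:R - 2) * c + mixed_curvature cubic_coef.
  under eq_bigr do rewrite !sec_curv_frame addrACA.
  by rewrite big_split /= (sum_high_cst n_gt1); congr (_ + _); ring.
rewrite -mixedE -(tau_fam_frame c C_sym e_on) /tau_blocks tau_L1 tau_L2 tau_famE //.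
rewrite (big_first_two_sym n_gt1 (fun i j => sec_curvC c C_sym (e i) (e j))).
by rewrite !sec_curv_diag (sec_curvC c C_sym (e o1)); field.
Qed.

Lemma H2_frame : H2 C = trace_sqr cubic_coef / n%:R ^+ 2.
Proof.
have n_neq0 : n%:R != 0 :> R by rewrite pnatr_eq0 -lt0n ltnW.
rewrite /H2 /mean_curv (sum_sff_frame (@std_basis_orthonormal R n)) -(sum_sff_frame e_on).
rewrite vdotZl vdotZr (vdot_frame e_on) /trace_sqr.
under eq_bigr do rewrite vdot_suml -expr2.
by field.
Qed.

End FrameCoefficients.

Section SumOfSquares.
Variables (R : realType) (n : nat) (n_ge5 : (5 <= n)%N).
Let n_gt1 := ge5_gt1 n_ge5.
Local Notation o0 := (o0 n_gt1).
Local Notation o1 := (o1 n_gt1).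

Variable D : 'I_n -> 'I_n -> 'I_n -> R.
Hypothesis D_sym : cubic_symmetric D.

Let D12 i j k : D i j k = D j i k. Proof. by case: (D_sym i j k). Qed.
Let D23 i j k : D i j k = D i k j. Proof. by case: (D_sym i j k). Qed.

Definition trace_L1 k := D o0 o0 k + D o1 o1 k.
Definition trace_L2 k := \sum_(j < n | (2 <= j)%N) D j j k.
Definition sqr_L1 k := D o0 o0 k ^+ 2 + 2 * D o0 o1 k ^+ 2 + D o1 o1 k ^+ 2.
Definition sqr_L2 a := \sum_(j < n | (2 <= j)%N) \sum_(k < n | (2 <= k)%N) D a j k ^+ 2.

Definition alpha : R := (n%:R - 2) / (4 * (n%:R - 1)).

Definition defect_L1 a :=
  alpha * (trace_L1 a + trace_L2 a) ^+ 2 - trace_L1 a * trace_L2 a + sqr_L2 a.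
Definition defect_L2 k :=
  alpha * (trace_L1 k + trace_L2 k) ^+ 2 - trace_L1 k * trace_L2 k + sqr_L1 k.

Lemma trace_sqr_split : trace_sqr D =
  (trace_L1 o0 + trace_L2 o0) ^+ 2 + (trace_L1 o1 + trace_L2 o1) ^+ 2
  + \sum_(k < n | (2 <= k)%N) (trace_L1 k + trace_L2 k) ^+ 2.
Proof.
rewrite /trace_sqr; under eq_bigr do rewrite (big_first_two n_gt1 (V := R)).
exact: big_first_two.
Qed.

Lemma mixed_curvature_split : mixed_curvature n_gt1 D =
  trace_L1 o0 * trace_L2 o0 + trace_L1 o1 * trace_L2 o1
  + \sum_(k < n | (2 <= k)%N) (trace_L1 k * trace_L2 k - sqr_L1 k) - sqr_L2 o0 - sqr_L2 o1.
Proof.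
have gaussE (j : 'I_n) : gauss D o0 j + gauss D o1 j =
    \sum_(k < n) trace_L1 k * D j j k - sqr_L1 j
    - \sum_(k < n | (2 <= k)%N) (D o0 j k ^+ 2 + D o1 j k ^+ 2).
  have trace_part : \sum_(k < n) D o0 o0 k * D j j k + \sum_(k < n) D o1 o1 k * D j j k
      = \sum_(k < n) trace_L1 k * D j j k.
    by rewrite -big_split; apply: eq_bigr => k _; rewrite mulrDl.
  have sqr_part : \sum_(k < n) D o0 j k ^+ 2 + \sum_(k < n) D o1 j k ^+ 2
      = sqr_L1 j + \sum_(k < n | (2 <= k)%N) (D o0 j k ^+ 2 + D o1 j k ^+ 2).
    rewrite -big_split (big_first_two n_gt1 (V := R)) /= /sqr_L1.
    by rewrite (D23 o0 j) (D23 o1 j) (D12 o1 o0 j) (D23 o0 j o1) (D23 o1 j o1); ring.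
  by rewrite /gauss; lra.
have trace_sum : \sum_(j < n | (2 <= j)%N) \sum_(k < n) trace_L1 k * D j j k
    = \sum_(k < n) trace_L1 k * trace_L2 k.
  by rewrite exchange_big /=; apply: eq_bigr => k _; rewrite mulr_sumr.
have sqr_sum : \sum_(j < n | (2 <= j)%N) \sum_(k < n | (2 <= k)%N) (D o0 j k ^+ 2 + D o1 j k ^+ 2)
    = sqr_L2 o0 + sqr_L2 o1.
  by rewrite -big_split; apply: eq_bigr => j _; rewrite big_split.
rewrite /mixed_curvature; under eq_bigr do rewrite gaussE.
rewrite !sumrB trace_sum sqr_sum (big_first_two n_gt1 (V := R)) /=.
ring.
Qed.

Lemma defect_decomposition : alpha * trace_sqr D - mixed_curvature n_gt1 D =
  defect_L1 o0 + defect_L1 o1 + \sum_(k < n | (2 <= k)%N) defect_L2 k.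
Proof.
have -> : \sum_(k < n | (2 <= k)%N) defect_L2 k =
    alpha * \sum_(k < n | (2 <= k)%N) (trace_L1 k + trace_L2 k) ^+ 2
    - \sum_(k < n | (2 <= k)%N) trace_L1 k * trace_L2 k + \sum_(k < n | (2 <= k)%N) sqr_L1 k.
  by rewrite mulr_sumr -sumrB -big_split.
by rewrite trace_sqr_split mixed_curvature_split sumrB /defect_L1; ring.
Qed.

Lemma n_ge5R : 5 <= n%:R :> R.
Proof. by rewrite (ler_nat R 5 n). Qed.

(* This is where [5 <= n] is needed; elsewhere [3 <= n] would do. *)
Lemma alpha_ge : 3 / 16 <= alpha.
Proof.
have n5 := n_ge5R; rewrite /alpha ler_pdivlMr; lra.
Qed.

Lemma defect_L2E k : defect_L2 k =
  (alpha - 3 / 16) * (trace_L1 k + trace_L2 k) ^+ 2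
  + (2 * trace_L1 k ^+ 2 + trace_L2 k ^+ 2 + 5 * (trace_L2 k - 2 * trace_L1 k) ^+ 2) / 32
  + (D o0 o0 k - D o1 o1 k) ^+ 2 / 2 + 2 * D o0 o1 k ^+ 2.
Proof. by rewrite /defect_L2 /sqr_L1 /trace_L1; field. Qed.

Lemma defect_L1E a : defect_L1 a =
  alpha * (trace_L1 a - n%:R / (n%:R - 2) * trace_L2 a) ^+ 2
  + \sum_(j < n | (2 <= j)%N) \sum_(k < n | (2 <= k)%N)
      (D a j k - (j == k)%:R * (trace_L2 a / (n%:R - 2))) ^+ 2.
Proof.
have n5 := n_ge5R.
have n2_neq0 : n%:R - 2 != 0 :> R by rewrite gt_eqF //; lra.
have n1_neq0 : n%:R - 1 != 0 :> R by rewrite gt_eqF //; lra.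
rewrite (sum_sqr_sub_diag n_gt1) /defect_L1 /alpha.
have -> : \sum_(j < n | (2 <= j)%N) D a j j = trace_L2 a.
  by apply: eq_bigr => j _; rewrite D12 D23.
by rewrite /sqr_L2; field; rewrite n2_neq0 n1_neq0.
Qed.

Lemma sqr_eq0 (x : R) : x ^+ 2 = 0 -> x = 0.
Proof. by move/eqP; rewrite sqrf_eq0 => /eqP. Qed.

Lemma defect_L1_ge0 a : 0 <= defect_L1 a.
Proof.
rewrite defect_L1E; apply: addr_ge0.
  by apply: mulr_ge0; [have := alpha_ge; lra | exact: sqr_ge0].
by do 2!apply: sumr_ge0 => ? _; exact: sqr_ge0.
Qed.

Lemma defect_L2_ge0 k : 0 <= defect_L2 k.
Proof.
rewrite defect_L2E; have := alpha_ge.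
have := sqr_ge0 (trace_L1 k + trace_L2 k); have := sqr_ge0 (trace_L1 k).
have := sqr_ge0 (trace_L2 k); have := sqr_ge0 (trace_L2 k - 2 * trace_L1 k).
have := sqr_ge0 (D o0 o0 k - D o1 o1 k); have := sqr_ge0 (D o0 o1 k).
nra.
Qed.

Definition mean_L2 a := trace_L2 a / (n%:R - 2).

Lemma defect_L1_eq0 a : defect_L1 a = 0 ->
  trace_L1 a = n%:R * mean_L2 a /\
  forall j k : 'I_n, (2 <= j)%N -> (2 <= k)%N -> D a j k = (j == k)%:R * mean_L2 a.
Proof.
rewrite defect_L1E -/(mean_L2 a); set X := _ ^+ 2; set S := \sum_(j < n | _) _.
have alpha_gt0 : 0 < alpha by have := alpha_ge; lra.
have X_ge0 : 0 <= X by exact: sqr_ge0.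
have S_ge0 : 0 <= S by do 2!apply: sumr_ge0 => ? _; exact: sqr_ge0.
move=> XS0; have X0 : X = 0 by nra.
have S0 : S = 0 by nra.
split.
  by move/sqr_eq0/eqP: X0; rewrite subr_eq0 => /eqP ->; rewrite mulrAC -mulrA.
move=> j k j_high k_high; apply/eqP; rewrite -subr_eq0; apply/eqP/sqr_eq0.
have row_ge0 (i : 'I_n) :
    0 <= \sum_(k < n | (2 <= k)%N) (D a i k - (i == k)%:R * mean_L2 a) ^+ 2.
  by apply: sumr_ge0 => ? _; exact: sqr_ge0.
have row0 := psumr_eq0P (fun i _ => row_ge0 i) S0 j_high.
exact: psumr_eq0P (fun k _ => sqr_ge0 _) row0 k k_high.
Qed.

Lemma defect_L2_eq0 k : defect_L2 k = 0 ->
  [/\ D o0 o0 k = 0, D o0 o1 k = 0, D o1 o1 k = 0 & trace_L2 k = 0].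
Proof.
rewrite defect_L2E /trace_L1; have := alpha_ge.
set t := D o0 o0 k + D o1 o1 k; set s := trace_L2 k.
have := sqr_ge0 (t + s); have := sqr_ge0 t; have := sqr_ge0 s.
have := sqr_ge0 (s - 2 * t); have := sqr_ge0 (D o0 o0 k - D o1 o1 k).
have := sqr_ge0 (D o0 o1 k) => *.
have /sqr_eq0 t0 : t ^+ 2 = 0 by nra.
have /sqr_eq0 s0 : s ^+ 2 = 0 by nra.
have /sqr_eq0 d0 : (D o0 o0 k - D o1 o1 k) ^+ 2 = 0 by nra.
have /sqr_eq0 d01 : D o0 o1 k ^+ 2 = 0 by nra.
by split => //; rewrite /t in t0; lra.
Qed.

Lemma mixed_curvature_eq_alpha :
  mixed_curvature n_gt1 D = alpha * trace_sqr D ->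
  [/\ forall k : 'I_n, (2 <= k)%N ->
        [/\ D o0 o0 k = 0, D o0 o1 k = 0, D o1 o1 k = 0 & trace_L2 k = 0],
      forall a j k : 'I_n, a = o0 \/ a = o1 -> (2 <= j)%N -> (2 <= k)%N ->
        D a j k = (j == k)%:R * mean_L2 a
    & forall a, a = o0 \/ a = o1 -> trace_L1 a = n%:R * mean_L2 a].
Proof.
move=> mixed_eq.
have defects0 : defect_L1 o0 + defect_L1 o1 + \sum_(k < n | (2 <= k)%N) defect_L2 k = 0.
  by rewrite -defect_decomposition mixed_eq subrr.
have L2_ge0 (k : 'I_n) : (2 <= k)%N -> 0 <= defect_L2 k by move=> _; exact: defect_L2_ge0.
have := defect_L1_ge0 o0; have := defect_L1_ge0 o1.
have : 0 <= \sum_(k < n | (2 <= k)%N) defect_L2 k by exact: sumr_ge0.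
move=> *; have L1_0 (a : 'I_n) : a = o0 \/ a = o1 -> defect_L1 a = 0 by case=> ->; lra.
have /(psumr_eq0P L2_ge0) L2_0 : \sum_(k < n | (2 <= k)%N) defect_L2 k = 0 by lra.
split.
- by move=> k /L2_0 /defect_L2_eq0.
- by move=> a j k /L1_0 /defect_L1_eq0 [_ D_a]; exact: D_a.
- by move=> a /L1_0 /defect_L1_eq0 [].
Qed.

End SumOfSquares.
Section Circle.
Variable R : realType.

Lemma poly_ge0_at0 (p : {poly R}) : (forall t, 0 < t -> 0 <= p.[t]) -> 0 <= p.[0].
Proof.
move=> p_ge0.
apply: (closed_cvg _ (@closed_ge _ 0) _ _ (cvg_at_right_filter (@continuous_horner _ p 0))).
by apply: filterS (nbhs_right_gt 0) => t /p_ge0.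
Qed.

Definition binary_cubic (g q b d x y : R) :=
  g * x ^+ 3 + 3 * q * x ^+ 2 * y + 3 * b * x * y ^+ 2 + d * y ^+ 3.

Section MaxAtPole.
Variables g q b d : R.
Hypothesis cubic_max :
  forall x y : R, x ^+ 2 + y ^+ 2 = 1 -> binary_cubic g q b d x y <= g.

Let horner_simpl := (hornerD, hornerM, hornerC, hornerX).

Let r2 : {poly R} := (6 * g - 12 * b)%:P + 'X * ((12 * q - 8 * d)%:P
  + 'X * ((12 * b)%:P + 'X * ((- 6 * q)%:P + 'X * (2 * g)%:P))).
Let r1 : {poly R} := (- 6 * q)%:P + 'X * r2.

Lemma pole_poly_ge0 t : 0 <= t * r1.[t].
Proof.
have t2 : 0 < 1 + t ^+ 2 by have := sqr_ge0 t; lra.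
have t2N0 : 1 + t ^+ 2 != 0 by rewrite gt_eqF.
(* the rational parametrisation of the unit circle *)
pose x := (1 - t ^+ 2) / (1 + t ^+ 2); pose y := 2 * t / (1 + t ^+ 2).
have /cubic_max : x ^+ 2 + y ^+ 2 = 1 by rewrite /x /y; field.
have -> : binary_cubic g q b d x y = g - t * r1.[t] / (1 + t ^+ 2) ^+ 3.
  by rewrite /binary_cubic /x /y !horner_simpl; field.
by rewrite lerBlDr lerDl pmulr_lge0 // invr_gt0 exprn_gt0.
Qed.

Lemma max_at_pole_linear_coef_le0 : q <= 0.
Proof.
suff : 0 <= r1.[0] by rewrite !horner_simpl; lra.
by apply: poly_ge0_at0 => t t_gt0; have := pole_poly_ge0 t; rewrite pmulr_rge0.
Qed.

Lemma max_at_pole_quadratic_coef : q = 0 -> 2 * b <= g.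
Proof.
move=> q0; suff : 0 <= r2.[0] by rewrite !horner_simpl; lra.
apply: poly_ge0_at0 => t t_gt0; have := pole_poly_ge0 t.
have -> : t * r1.[t] = t ^+ 2 * r2.[t] by rewrite /r1 q0 !horner_simpl; ring.
by rewrite pmulr_rge0 ?exprn_gt0.
Qed.

End MaxAtPole.
Lemma binary_cubic_max_at_pole g q b d :
  (forall x y : R, x ^+ 2 + y ^+ 2 = 1 -> binary_cubic g q b d x y <= g) ->
  [/\ q = 0, 2 * b <= g, 0 <= g & g = 0 -> b = 0 /\ d = 0].
Proof.
move=> cubic_max.
have q0 : q = 0.
  apply/eqP; rewrite eq_le (max_at_pole_linear_coef_le0 cubic_max) /= -oppr_le0.
  apply: (@max_at_pole_linear_coef_le0 g _ b (- d)) => x y xy.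
  have -> : binary_cubic g (- q) b (- d) x y = binary_cubic g q b d x (- y).
    by rewrite /binary_cubic; ring.
  by apply: cubic_max; rewrite sqrrN.
have b2 := max_at_pole_quadratic_coef cubic_max q0.
have := cubic_max (-1) 0 ltac:(ring); have := cubic_max 0 1 ltac:(ring).
have := cubic_max 0 (-1) ltac:(ring); have := cubic_max (- (3 / 5)) (4 / 5) ltac:(field).
rewrite /binary_cubic q0 => ? ? ? ?; split=> // [|g0]; first lra.
split; lra.
Qed.

End Circle.

Section Rotation.
Variables (R : realType) (n : nat) (c : R) (C : 'I_n -> 'I_n -> 'I_n -> R).
Hypothesis C_sym : cubic_symmetric C.
Implicit Types u v : 'rV[R]_n.

Lemma sec_curv_rot (a b : R) u v : a ^+ 2 + b ^+ 2 = 1 ->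
  sec_curv c C (a *: u + b *: v) ((- b) *: u + a *: v) = sec_curv c C u v.
Proof.
move=> ab1; rewrite /sec_curv !(sffDl, sffDr C_sym, sffZl, sffZr C_sym) (sffC C_sym v u).
rewrite !(vdotDl, vdotDr, vdotZl, vdotZr) (vdotC (sff C v v)) (vdotC (sff C u v) (sff C u u)).
rewrite (vdotC (sff C v v) (sff C u v)).
set Z := vdot (sff C u u) (sff C v v); set W := vdot (sff C u v) (sff C u v).
transitivity (c + (a ^+ 2 + b ^+ 2) ^+ 2 * (Z - W)); first ring.
by rewrite ab1 expr1n mul1r addrA.
Qed.

Lemma cubic_form_rot (a b : R) u v :
  cubic_form C (a *: u + b *: v) (a *: u + b *: v) (a *: u + b *: v) =
  binary_cubic (cubic_form C u u u) (cubic_form C u u v) (cubic_form C u v v)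
    (cubic_form C v v v) a b.
Proof.
rewrite (cubic_formDr C_sym) !(cubic_formDm C_sym) !cubic_formDl.
rewrite (cubic_formC23 C_sym v v u) (cubic_formC12 C_sym v u u).
rewrite (cubic_formC12 C_sym v u v) (cubic_formC23 C_sym u v u).
by rewrite /binary_cubic; ring.
Qed.

Variable n_gt1 : (1 < n)%N.
Local Notation o0 := (o0 n_gt1).
Local Notation o1 := (o1 n_gt1).

Definition frame_rot (e : 'I_n -> 'rV[R]_n) (a b : R) (i : 'I_n) : 'rV[R]_n :=
  if i == o0 then a *: e o0 + b *: e o1
  else if i == o1 then (- b) *: e o0 + a *: e o1 else e i.

Lemma frame_rot_o0 e a b : frame_rot e a b o0 = a *: e o0 + b *: e o1.
Proof. by rewrite /frame_rot eqxx. Qed.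

Lemma frame_rot_o1 e a b : frame_rot e a b o1 = (- b) *: e o0 + a *: e o1.
Proof. by rewrite /frame_rot eqxx. Qed.

Lemma frame_rot_high e a b (i : 'I_n) : (2 <= i)%N -> frame_rot e a b i = e i.
Proof. by move=> i_high; rewrite /frame_rot (neq_o0 n_gt1) // (neq_o1 n_gt1). Qed.

Lemma frame_rot_orthonormal e a b : orthonormal_family e -> a ^+ 2 + b ^+ 2 = 1 ->
  orthonormal_family (frame_rot e a b).
Proof.
move=> e_on ab1.
have dot_plane p q r s : vdot (p *: e o0 + q *: e o1) (r *: e o0 + s *: e o1) = p * r + q * s.
  by rewrite vdotDl !vdotDr !vdotZl !vdotZr !e_on !eqxx /=; ring.
have dot_high p q (k : 'I_n) : (2 <= k)%N -> vdot (p *: e o0 + q *: e o1) (e k) = 0.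
  move=> k_high; rewrite vdotDl !vdotZl !e_on.
  by rewrite eq_sym (neq_o0 n_gt1) // eq_sym (neq_o1 n_gt1) // !mulr0 addr0.
move=> i j; have [->|->|i_high] := ord_cases n_gt1 i; have [->|->|j_high] := ord_cases n_gt1 j;
  rewrite ?frame_rot_o0 ?frame_rot_o1 ?frame_rot_high ?dot_plane ?dot_high ?eqxx //.
- by rewrite /=; ring.
- by rewrite eq_sym (neq_o0 n_gt1).
- by rewrite /=; ring.
- by rewrite mulrNN -!expr2 addrC ab1.
- by rewrite eq_sym (neq_o1 n_gt1).
- by rewrite vdotC dot_high // (neq_o0 n_gt1).
- by rewrite vdotC dot_high // (neq_o1 n_gt1).
Qed.

Lemma tau_blocks_rot e a b : a ^+ 2 + b ^+ 2 = 1 ->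
  tau_blocks n_gt1 c C (frame_rot e a b) = tau_blocks n_gt1 c C e.
Proof.
by move=> ab1; rewrite /tau_blocks !tau_L1 // frame_rot_o0 frame_rot_o1 sec_curv_rot.
Qed.

End Rotation.

Section FrameSpace.
Local Open Scope classical_set_scope.
Variables (R : realType) (n : nat).
Local Notation space := 'rV[R]_(n * n).

(* A frame [f] is encoded as the point of [R^(n*n)] whose [i]-th block of [n]
   coordinates is [f i]. *)
Definition frame_of (x : space) (i : 'I_n) : 'rV[R]_n := row i (vec_mx x).
Definition point_of_frame (f : 'I_n -> 'rV[R]_n) : space := mxvec (\matrix_(i, p) f i 0 p).

Lemma point_of_frameK f : frame_of (point_of_frame f) = f.
Proof. by apply: funext => i; apply/rowP => p; rewrite /frame_of mxvecK !mxE. Qed.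

Definition entrywise_continuous (F : space -> 'rV[R]_n) :=
  forall p, continuous (fun x => F x 0 p).

Lemma continuous_sum I (r : seq I) (P : pred I) (F : I -> space -> R) :
  (forall i, continuous (F i)) -> continuous (fun x => \sum_(i <- r | P i) F i x).
Proof.
by move=> F_cont; apply: continuous_big => [|i _]; [exact: add_continuous | exact: F_cont].
Qed.

Lemma continuous_frame_of i : entrywise_continuous (frame_of ^~ i).
Proof.
move=> p; rewrite (_ : (fun x => _) = fun x : space => x 0 (mxvec_index i p)).
  exact: coord_continuous.
by apply: funext => x; rewrite /frame_of !mxE.
Qed.

Lemma continuous_vdot F G : entrywise_continuous F -> entrywise_continuous G ->
  continuous (fun x => vdot (F x) (G x)).
Proof.
move=> F_cont G_cont; apply: continuous_sum => p x.
by apply: continuousM; [exact: F_cont | exact: G_cont].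
Qed.

Variable C : 'I_n -> 'I_n -> 'I_n -> R.

Lemma continuous_sff F G : entrywise_continuous F -> entrywise_continuous G ->
  entrywise_continuous (fun x => sff C (F x) (G x)).
Proof.
move=> F_cont G_cont k.
rewrite (_ : (fun x => _) = fun x => \sum_(p < n) \sum_(q < n) F x 0 p * G x 0 q * C p q k).
  apply: continuous_sum => p; apply: continuous_sum => q x /=.
  apply: (@continuousM _ _ (fun x => F x 0 p * G x 0 q) (fun=> C p q k)).
    by apply: continuousM; [exact: F_cont | exact: G_cont].
  exact: cst_continuous.
by apply: funext => x; rewrite sffE.
Qed.

Lemma continuous_sec_curv (c : R) F G : entrywise_continuous F -> entrywise_continuous G ->
  continuous (fun x => sec_curv c C (F x) (G x)).
Proof.
move=> F_cont G_cont x; rewrite /sec_curv.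
have hF := continuous_sff F_cont F_cont; have hG := continuous_sff G_cont G_cont.
have hFG := continuous_sff F_cont G_cont.
apply: (continuousB (f := fun x => c + vdot (sff C (F x) (F x)) (sff C (G x) (G x))));
  last exact: continuous_vdot.
by apply: (continuousD (f := fun=> c)); [exact: cst_continuous | exact: continuous_vdot].
Qed.

Lemma continuous_tau_fam (c : R) r (F : 'I_r -> space -> 'rV[R]_n) :
  (forall a, entrywise_continuous (F a)) -> continuous (fun x => tau_fam c C (F ^~ x)).
Proof.
move=> F_cont; apply: continuous_sum => a; apply: continuous_sum => b.
exact: continuous_sec_curv.
Qed.

Definition orthonormal_frames : set space := [set x | orthonormal_family (frame_of x)].

Lemma point_of_frame_orthonormal f :
  orthonormal_family f -> orthonormal_frames (point_of_frame f).
Proof. by rewrite /orthonormal_frames /= point_of_frameK. Qed.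

Lemma orthonormal_frames_closed : closed orthonormal_frames.
Proof.
have -> : orthonormal_frames = \bigcap_(ab in [set: 'I_n * 'I_n])
    ((fun x => vdot (frame_of x ab.1) (frame_of x ab.2)) @^-1` [set (ab.1 == ab.2)%:R]).
  by apply/seteqP; split => [x x_on [a b] _ | x x_on a b] //=; exact: (x_on (a, b)).
apply: closed_bigI => ab _; apply: preimage_closed; last exact: closed_eq.
by move=> x _; apply: continuous_vdot; exact: continuous_frame_of.
Qed.

(* Unit vectors have coordinates in [[-1, 1]]. *)
Lemma orthonormal_frames_compact : compact orthonormal_frames.
Proof.
apply: (subclosed_compact orthonormal_frames_closed
  (rV_compact (fun _ => @segment_compact R (-1) 1))).
move=> x x_on k /=; case/mxvec_indexP: k => i p.
have xii := x_on i i; rewrite eqxx /vdot (bigD1 p) //= in xii.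
have : 0 <= \sum_(q < n | q != p) frame_of x i 0 q * frame_of x i 0 q.
  by apply: sumr_ge0 => q _; rewrite -expr2; exact: sqr_ge0.
have -> : x 0 (mxvec_index i p) = frame_of x i 0 p by rewrite /frame_of !mxE.
by rewrite in_itv /=; move: (frame_of x i 0 p) xii => y xii ?; apply/andP; split; nra.
Qed.

End FrameSpace.

Section ExtremalFrame.
Local Open Scope classical_set_scope.
Variables (R : realType) (n : nat) (n_gt1 : (1 < n)%N) (c : R).
Variable C : 'I_n -> 'I_n -> 'I_n -> R.
Local Notation o0 := (o0 n_gt1).
Local Notation tau_blocks := (tau_blocks n_gt1 c C).

Let cube (f : 'I_n -> 'rV[R]_n) := cubic_form C (f o0) (f o0) (f o0).

Lemma exists_extremal_frame : exists e, [/\ orthonormal_family e,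
  forall f, orthonormal_family f -> tau_blocks e <= tau_blocks f &
  forall f, orthonormal_family f -> tau_blocks f = tau_blocks e -> cube f <= cube e].
Proof.
pose G x := tau_blocks (frame_of x).
have G_cont : continuous G.
  move=> x; apply: (continuousD (f := fun x => tau_fam c C (frame_of x \o ord_L1 n_gt1)));
    by apply: continuous_tau_fam => a; exact: continuous_frame_of.
have frames0 : @orthonormal_frames R n !=set0.
  exists (point_of_frame (@std_basis R n)).
  exact/point_of_frame_orthonormal/std_basis_orthonormal.
have [xm /set_mem xm_on xm_min] :=
  EVT_min_rV frames0 (@orthonormal_frames_compact R n) (continuous_subspaceT G_cont).
pose minimisers := @orthonormal_frames R n `&` G @^-1` [set G xm].
have min_compact : compact minimisers.
  apply: compact_closedI (@orthonormal_frames_compact R n) _.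
  by apply: preimage_closed; [move=> x _; exact: G_cont | exact: closed_eq].
have min0 : minimisers !=set0 by exists xm.
have cube_cont : continuous (fun x => cube (frame_of x)).
  by apply: continuous_vdot; [apply: continuous_sff|]; exact: continuous_frame_of.
have [xe /set_mem [xe_on xe_G] xe_max] :=
  EVT_max_rV min0 min_compact (continuous_subspaceT cube_cont).
have f_pt f : orthonormal_family f -> point_of_frame f \in @orthonormal_frames R n.
  by move=> f_on; rewrite inE; exact: point_of_frame_orthonormal.
exists (frame_of xe); split => // f f_on.
  have -> : tau_blocks (frame_of xe) = G xm by exact: xe_G.
  by rewrite -(point_of_frameK f); exact/xm_min/f_pt.
move=> Gf; rewrite -(point_of_frameK f); apply/xe_max; rewrite inE; split.
  exact: point_of_frame_orthonormal.
by rewrite /= /G point_of_frameK Gf.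
Qed.

Lemma delta2_min_frame e : orthonormal_family e ->
  (forall f, orthonormal_family f -> tau_blocks e <= tau_blocks f) ->
  delta2 c C = tau_p c C - tau_blocks e.
Proof.
move=> e_on e_min; congr (_ - _); set S := (X in inf X).
have S_e : S (tau_blocks e).
  exists (e \o ord_L1 n_gt1), (e \o ord_L2 n_gt1); split; last split; last split => //.
  - by move=> a b; rewrite /= e_on (inj_eq (@ord_L1_inj n n_gt1)).
  - by move=> a b; rewrite /= e_on (inj_eq (@ord_L2_inj n n_gt1)).
  - by move=> a b; rewrite /= e_on ord_L1_neq_L2.
have S_lb : lbound S (tau_blocks e).
  move=> _ [f1 [f2 [f1_on [f2_on [f12 ->]]]]].
  have := e_min _ (frame_join_orthonormal n_gt1 f1_on f2_on f12); rewrite /tau_blocks.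
  have -> : frame_join n_gt1 f1 f2 \o ord_L1 n_gt1 = f1.
    by apply: funext => a; exact: frame_join_L1.
  have -> : frame_join n_gt1 f1 f2 \o ord_L2 n_gt1 = f2.
    by apply: funext => b; exact: frame_join_L2.
  by [].
apply/eqP; rewrite eq_le ge_inf //=; last by exists (tau_blocks e).
by apply: lb_le_inf => //; exists (tau_blocks e).
Qed.

End ExtremalFrame.

Section EqualityCase.
Variables (R : realType) (n : nat) (n_ge5 : (5 <= n)%N) (c : R).
Let n_gt1 := ge5_gt1 n_ge5.
Local Notation o0 := (o0 n_gt1).
Local Notation o1 := (o1 n_gt1).
Variable C : 'I_n -> 'I_n -> 'I_n -> R.
Hypothesis C_sym : cubic_symmetric C.
Variable e : 'I_n -> 'rV[R]_n.
Hypothesis e_on : orthonormal_family e.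
Local Notation D := (cubic_coef C e).

Lemma mixed_curvature_eq_of_equality :
  tau_p c C - tau_blocks n_gt1 c C e =
    n%:R ^+ 2 * (n%:R - 2) / (4 * (n%:R - 1)) * H2 C + 2 * (n%:R - 2) * c ->
  mixed_curvature n_gt1 D = alpha R n * trace_sqr D.
Proof.
have n5 := n_ge5R R n_ge5.
have n_neq0 : n%:R != 0 :> R by rewrite gt_eqF //; lra.
have n1_neq0 : n%:R - 1 != 0 :> R by rewrite gt_eqF //; lra.
rewrite tau_p_split // (H2_frame n_gt1 C e_on) => equality.
have -> : mixed_curvature n_gt1 D =
    n%:R ^+ 2 * (n%:R - 2) / (4 * (n%:R - 1)) * (trace_sqr D / n%:R ^+ 2) by lra.
by rewrite /alpha; field; rewrite n_neq0 n1_neq0.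
Qed.

Lemma cubic_max_on_circle :
  (forall f, orthonormal_family f -> tau_blocks n_gt1 c C f = tau_blocks n_gt1 c C e ->
     cubic_form C (f o0) (f o0) (f o0) <= cubic_form C (e o0) (e o0) (e o0)) ->
  forall a b : R, a ^+ 2 + b ^+ 2 = 1 ->
    binary_cubic (D o0 o0 o0) (D o0 o0 o1) (D o0 o1 o1) (D o1 o1 o1) a b <= D o0 o0 o0.
Proof.
move=> e_max a b ab1; rewrite /cubic_coef -cubic_form_rot // -(frame_rot_o0 n_gt1 e).
apply: e_max; first exact: frame_rot_orthonormal.
exact: tau_blocks_rot.
Qed.

Hypothesis mixed_eq : mixed_curvature n_gt1 D = alpha R n * trace_sqr D.
Hypothesis cubic_max : forall a b : R, a ^+ 2 + b ^+ 2 = 1 ->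
  binary_cubic (D o0 o0 o0) (D o0 o0 o1) (D o0 o1 o1) (D o1 o1 o1) a b <= D o0 o0 o0.

Let D12 i j k : D i j k = D j i k. Proof. by case: (cubic_coef_sym C_sym e i j k). Qed.
Let D23 i j k : D i j k = D i k j. Proof. by case: (cubic_coef_sym C_sym e i j k). Qed.

Definition gamma := D o0 o0 o0.
Definition lambda := mean_L2 D o0.
Definition mu := mean_L2 D o1.

Let structure := mixed_curvature_eq_alpha (cubic_coef_sym C_sym e) mixed_eq.
Let pole := binary_cubic_max_at_pole cubic_max.

(* Indices in these names are 1-based: [cubic_coef_ijk] is [<h(e_i, e_j), J e_k>]. *)
Lemma cubic_coef_112 : D o0 o0 o1 = 0.
Proof. by case: pole. Qed.

Lemma cubic_coef_122 : D o0 o1 o1 = n%:R * lambda - gamma.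
Proof.
have [_ _ /(_ o0 (or_introl erefl))] := structure.
by rewrite /trace_L1 (D23 o1 o1 o0) (D12 o1 o0 o1) -/gamma => <-; rewrite addrC addKr.
Qed.

Lemma cubic_coef_222 : D o1 o1 o1 = n%:R * mu.
Proof.
have [_ _ /(_ o1 (or_intror erefl))] := structure.
by rewrite /trace_L1 cubic_coef_112 add0r.
Qed.

Lemma sff_frame_split i j : sff C (e i) (e j) =
  D i j o0 *: e o0 + D i j o1 *: e o1 + \sum_(k < n | (2 <= k)%N) D i j k *: e k.
Proof. by rewrite sff_frame // big_first_two. Qed.

Let sum_delta_scale (j : 'I_n) (a : R) : (2 <= j)%N ->
  \sum_(k < n | (2 <= k)%N) ((j == k)%:R * a) *: e k = a *: e j.
Proof.
move=> j_high; rewrite (bigD1 j) //= eqxx mul1r big1 ?addr0 // => k /andP[_ /negbTE].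
by rewrite eq_sym => ->; rewrite mul0r scale0r.
Qed.

Lemma sff_o0o0 : sff C (e o0) (e o0) = gamma *: e o0.
Proof.
rewrite sff_frame_split cubic_coef_112 scale0r addr0 big1 ?addr0 // => k k_high.
by have [/(_ k k_high) [-> _ _ _] _ _] := structure; rewrite scale0r.
Qed.

Lemma sff_o0o1 : sff C (e o0) (e o1) = (n%:R * lambda - gamma) *: e o1.
Proof.
rewrite sff_frame_split (D23 o0 o1 o0) cubic_coef_112 cubic_coef_122 scale0r add0r.
rewrite big1 ?addr0 // => k k_high.
by have [/(_ k k_high) [_ -> _ _] _ _] := structure; rewrite scale0r.
Qed.

Lemma sff_o1o1 : sff C (e o1) (e o1) = (n%:R * lambda - gamma) *: e o0 + (n%:R * mu) *: e o1.
Proof.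
rewrite sff_frame_split (D23 o1 o1 o0) (D12 o1 o0 o1) cubic_coef_122 cubic_coef_222.
rewrite big1 ?addr0 // => k k_high.
by have [/(_ k k_high) [_ _ -> _] _ _] := structure; rewrite scale0r.
Qed.

Lemma sff_o0_high (i : 'I_n) : (2 <= i)%N -> sff C (e o0) (e i) = lambda *: e i.
Proof.
move=> i_high; have [/(_ i i_high) [D00i D01i _ _] D_high _] := structure.
rewrite sff_frame_split (D23 o0 i o0) (D23 o0 i o1) D00i D01i !scale0r !add0r.
under eq_bigr => k k_high do rewrite (D_high o0 i k (or_introl erefl) i_high k_high).
exact: sum_delta_scale.
Qed.

Lemma sff_o1_high (i : 'I_n) : (2 <= i)%N -> sff C (e o1) (e i) = mu *: e i.
Proof.
move=> i_high; have [/(_ i i_high) [_ D01i D11i _] D_high _] := structure.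
rewrite sff_frame_split (D23 o1 i o0) (D12 o1 o0 i) (D23 o1 i o1) D01i D11i !scale0r !add0r.
under eq_bigr => k k_high do rewrite (D_high o1 i k (or_intror erefl) i_high k_high).
exact: sum_delta_scale.
Qed.

Lemma sff_high (i j : 'I_n) : (2 <= i)%N -> (2 <= j)%N ->
  sff C (e i) (e j) = (i == j)%:R *: (lambda *: e o0 + mu *: e o1)
                      + \sum_(k < n | (2 <= k)%N) D i j k *: e k.
Proof.
move=> i_high j_high; have [_ D_high _] := structure.
rewrite sff_frame_split (D23 i j o0) (D12 i o0 j) (D23 i j o1) (D12 i o1 j).
rewrite (D_high o0 i j (or_introl erefl)) // (D_high o1 i j (or_intror erefl)) //.
by rewrite scalerDr !scalerA.
Qed.

Lemma trace_free (k : 'I_n) : (2 <= k)%N -> \sum_(i < n | (2 <= i)%N) D i i k = 0.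
Proof. by move=> k_high; have [/(_ k k_high) [_ _ _ tr0] _ _] := structure. Qed.

Lemma gamma_bounds : [/\ 0 <= gamma, 2 * n%:R / 3 * lambda <= gamma,
  gamma = 0 -> lambda = 0 /\ mu = 0 & 0 < gamma -> n%:R / 2 * lambda < gamma].
Proof.
have n_gt0 : 0 < n%:R :> R by rewrite ltr0n ltnW.
have [_ b_le g_ge0 g0] := pole.
rewrite cubic_coef_122 -/gamma in b_le g0 *; rewrite cubic_coef_222 in g0.
split => // [|g_eq0|]; first lra; last lra.
have [] := g0 g_eq0; rewrite g_eq0 subr0 => nl0 nm0.
by split; apply: (mulfI (lt0r_neq0 n_gt0)); rewrite mulr0.
Qed.

End EqualityCase.


Theorem lemma3p1 (R : realType) (n : nat) (hn : (5 <= n)%N) (c : R)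
  (C : 'I_n -> 'I_n -> 'I_n -> R) (hLag : cubic_symmetric C)
  (heq : delta2 c C =
         (n%:R ^+ 2 * (n%:R - 2)) / (4 * (n%:R - 1)) * H2 C
         + 2 * (n%:R - 2) * c) :
  exists (e : 'I_n -> 'rV[R]_n) (gamma lambda mu : R)
         (hk : 'I_n -> 'I_n -> 'I_n -> R),
    orthonormal_family e /\
    (* h(e1,e1) = gamma J e1 *)
    (forall a : 'I_n, val a = 0%N -> sff C (e a) (e a) = gamma *: e a) /\
    (* h(e1,e2) = (n lambda - gamma) J e2 *)
    (forall a b : 'I_n, val a = 0%N -> val b = 1%N ->
       sff C (e a) (e b) = (n%:R * lambda - gamma) *: e b) /\
    (* h(e2,e2) = (n lambda - gamma) J e1 + n mu J e2 *)
    (forall a b : 'I_n, val a = 0%N -> val b = 1%N ->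
       sff C (e b) (e b) = (n%:R * lambda - gamma) *: e a + (n%:R * mu) *: e b) /\
    (* h(e1,ei) = lambda J ei,  h(e2,ei) = mu J ei  (i >= 3) *)
    (forall a i : 'I_n, val a = 0%N -> (2 <= val i)%N ->
       sff C (e a) (e i) = lambda *: e i) /\
    (forall b i : 'I_n, val b = 1%N -> (2 <= val i)%N ->
       sff C (e b) (e i) = mu *: e i) /\
    (* h(ei,ej) = delta_ij (lambda J e1 + mu J e2) + sum_{k>=3} h^k_ij J ek *)
    (forall a b i j : 'I_n, val a = 0%N -> val b = 1%N ->
       (2 <= val i)%N -> (2 <= val j)%N ->
       sff C (e i) (e j) =
         (i == j)%:R *: (lambda *: e a + mu *: e b)
         + \sum_(k < n | (2 <= val k)%N) hk i j k *: e k) /\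
    (* h^k_ij symmetric in i, j, k >= 3 *)
    (forall i j k : 'I_n, (2 <= val i)%N -> (2 <= val j)%N -> (2 <= val k)%N ->
       hk i j k = hk j i k /\ hk i j k = hk i k j) /\
    (* h^k_33 + ... + h^k_nn = 0 *)
    (forall k : 'I_n, (2 <= val k)%N ->
       \sum_(i < n | (2 <= val i)%N) hk i i k = 0) /\
    0 <= gamma /\
    2%:R * n%:R / 3%:R * lambda <= gamma /\
    (gamma = 0 -> lambda = 0 /\ mu = 0) /\
    (0 < gamma -> n%:R / 2 * lambda < gamma).
Proof.
pose n_gt1 := ge5_gt1 hn.
have [e [e_on e_min e_max]] := exists_extremal_frame n_gt1 c C.
have equality : tau_p c C - tau_blocks n_gt1 c C e =
    n%:R ^+ 2 * (n%:R - 2) / (4 * (n%:R - 1)) * H2 C + 2 * (n%:R - 2) * c.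
  by rewrite -(delta2_min_frame e_on e_min).
have mixed_eq := mixed_curvature_eq_of_equality hLag e_on equality.
have cubic_max := cubic_max_on_circle hLag e_on e_max.
exists e, (gamma hn C e), (lambda hn C e), (mu hn C e), (cubic_coef C e).
split => //; split; first by move=> a /ord_eq_o0 ->; exact: sff_o0o0 cubic_max.
split; first by move=> a b /ord_eq_o0 -> /ord_eq_o1 ->; exact: sff_o0o1 cubic_max.
split; first by move=> a b /ord_eq_o0 -> /ord_eq_o1 ->; exact: sff_o1o1 cubic_max.
split; first by move=> a i /ord_eq_o0 ->; exact: sff_o0_high.
split; first by move=> b i /ord_eq_o1 ->; exact: sff_o1_high.
split; first by move=> a b i j /ord_eq_o0 -> /ord_eq_o1 ->; exact: sff_high.
split; first by move=> i j k _ _ _; exact: cubic_coef_sym.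
split; first by move=> k; exact: (trace_free hLag mixed_eq).
by have [] := gamma_bounds hLag mixed_eq cubic_max.
Qed.
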